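(* Let $\mathcal H$ be a well-structured preconditioner set and $M\in\mathcal S^d_{++}$. Then $\langle M,H\rangle=\langle P_{\mathcal H}(M)^2,H\rangle$ for every $H\in\mathcal H$, and $P_{\mathcal H}(M+\lambda I_d)^2=P_{\mathcal H}(M)^2+\lambda I_d$ for every $\lambda\ge0$.
   Context: $\mathcal S^d_+$ (resp. $\mathcal S^d_{++}$) denotes the set of real symmetric positive semidefinite (resp. positive definite) $d\times d$ matrices; $\langle A,B\rangle=\operatorname{Tr}(A^\top B)$. A set $\mathcal H\subseteq\mathcal S_+^d$ is a well-structured preconditioner set if $\mathcal H=\mathcal S_+^d\cap\mathcal K$ for some set $\mathcal K$ of real $d\times d$ matrices that is closed under scalar multiplication, matrix addition and matrix multiplication and contains the identity $I_d$. For $M\in\mathcal S^d_{++}$, $P_{\mathcal H}(M):=\arg\min_{H\in\mathcal H\cap\mathcal S^d_{++}}\langle M,H^{-1}\rangle+\operatorname{Tr}(H)$ (the minimizer exists and is unique). *)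

From HB Require Import structures.
From mathcomp Require Import all_boot all_order all_algebra.
From mathcomp Require Import reals.
Set Implicit Arguments. Unset Strict Implicit. Unset Printing Implicit Defensive.
Import Order.TTheory GRing.Theory Num.Theory.
Local Open Scope ring_scope.

Section Defs.
Variables (R : realType) (d : nat).

Definition frob (A B : 'M[R]_d) : R := \tr (A^T *m B).

Definition psd (A : 'M[R]_d) : Prop :=
  A^T = A /\ forall x : 'cV[R]_d, 0 <= (x^T *m A *m x) 0 0.
Definition pd (A : 'M[R]_d) : Prop :=
  A^T = A /\ forall x : 'cV[R]_d, x != 0 -> 0 < (x^T *m A *m x) 0 0.

Definition well_structured (Hs : 'M[R]_d -> Prop) : Prop :=
  exists K : 'M[R]_d -> Prop,
    [/\ forall (a : R) A, K A -> K (a *: A),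
        forall A B, K A -> K B -> K (A + B),
        forall A B, K A -> K B -> K (A *m B),
        K 1%:M
      & forall H, Hs H <-> (psd H /\ K H)].

Definition is_PH (Hs : 'M[R]_d -> Prop) (M P : 'M[R]_d) : Prop :=
  [/\ Hs P, pd P &
      forall Q, Hs Q -> pd Q ->
        frob M (invmx P) + \tr P <= frob M (invmx Q) + \tr Q].

End Defs.

From HB Require Import structures.
From mathcomp Require Import all_boot all_order all_algebra.
From mathcomp Require Import reals.
From mathcomp Require Import ring lra.
Import Order.TTheory GRing.Theory Num.Theory.
Local Open Scope ring_scope.
Set Implicit Arguments. Unset Strict Implicit. Unset Printing Implicit Defensive.

(* Let f(H) = <M, H^-1> + Tr H.  For symmetric D in K, P + tD stays in the
   preconditioner set for small |t|, and the resolvent identity gives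
   f(P + tD) - f(P) = t (Tr D - <M, P^-1 D P^-1>) + O(t^2) with a uniform
   constant, so minimality forces Tr D = <M, P^-1 D P^-1>.  With D = P H P
   this is <M, H> = <P^2, H>.  For the second claim, S = Q^2 - P^2 - lam I is
   a symmetric element of K orthogonal to the whole preconditioner set by the
   first claim; as I and c I + S belong to that set for c large, <S, S> = 0. *)


Section QuadraticForm.
Variables (R : realFieldType) (d : nat).
Implicit Types (A B N : 'M[R]_d) (x y z : 'cV[R]_d).

Definition vdot x y : R := (x^T *m y) 0 0.
Definition vnorm2 x : R := vdot x x.
Definition qform A x : R := (x^T *m A *m x) 0 0.

Lemma vdotC x y : vdot x y = vdot y x.
Proof. by rewrite /vdot !mxE; apply: eq_bigr => i _; rewrite !mxE mulrC. Qed.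
Lemma vdotDr x y z : vdot x (y + z) = vdot x y + vdot x z.
Proof. by rewrite /vdot mulmxDr mxE. Qed.
Lemma vdotZr a x y : vdot x (a *: y) = a * vdot x y.
Proof. by rewrite /vdot -scalemxAr mxE. Qed.
Lemma vdotNr x y : vdot x (- y) = - vdot x y.
Proof. by rewrite -scaleN1r vdotZr mulN1r. Qed.
Lemma vdotBr x y z : vdot x (y - z) = vdot x y - vdot x z.
Proof. by rewrite vdotDr vdotNr. Qed.
Lemma vdotDl x y z : vdot (x + y) z = vdot x z + vdot y z.
Proof. by rewrite vdotC vdotDr !(vdotC z). Qed.
Lemma vdotZl a x y : vdot (a *: x) y = a * vdot x y.
Proof. by rewrite vdotC vdotZr vdotC. Qed.
Lemma vdotNl x y : vdot (- x) y = - vdot x y.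
Proof. by rewrite vdotC vdotNr vdotC. Qed.
Lemma vdotBl x y z : vdot (x - y) z = vdot x z - vdot y z.
Proof. by rewrite vdotC vdotBr !(vdotC z). Qed.
Lemma vdot_mulmxr x A y : vdot x (A *m y) = vdot (A^T *m x) y.
Proof. by rewrite /vdot trmx_mul trmxK mulmxA. Qed.

Lemma qformE A x : qform A x = vdot x (A *m x).
Proof. by rewrite /qform /vdot mulmxA. Qed.
Lemma qformD A B x : qform (A + B) x = qform A x + qform B x.
Proof. by rewrite !qformE mulmxDl vdotDr. Qed.
Lemma qformZ a A x : qform (a *: A) x = a * qform A x.
Proof. by rewrite !qformE -scalemxAl vdotZr. Qed.
Lemma qform1 x : qform 1%:M x = vnorm2 x.
Proof. by rewrite qformE mul1mx. Qed.

Lemma vnorm2E x : vnorm2 x = \sum_i x i 0 ^+ 2.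
Proof. by rewrite /vnorm2 /vdot mxE; apply: eq_bigr => i _; rewrite mxE expr2. Qed.

Lemma vnorm2_ge0 x : 0 <= vnorm2 x.
Proof. by rewrite vnorm2E; apply: sumr_ge0 => i _; apply: sqr_ge0. Qed.

Lemma sqr_coord_le_vnorm2 x i : x i 0 ^+ 2 <= vnorm2 x.
Proof.
by rewrite vnorm2E (bigD1 i) //= lerDl; apply: sumr_ge0 => j _; apply: sqr_ge0.
Qed.

Lemma vnorm2_gt0 x : x != 0 -> 0 < vnorm2 x.
Proof.
move=> /eqP nz; rewrite lt_def vnorm2_ge0 andbT; apply/eqP => x0; apply: nz.
apply/matrixP => i j; rewrite ord1 mxE; apply/eqP; rewrite -sqrf_eq0 eq_le sqr_ge0.
by rewrite -x0 sqr_coord_le_vnorm2.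
Qed.

Lemma qform_sum A x : qform A x = \sum_i \sum_j x i 0 * A i j * x j 0.
Proof.
rewrite /qform mxE exchange_big /=; apply: eq_bigr => j _.
by rewrite mxE mulr_suml; apply: eq_bigr => i _; rewrite !mxE.
Qed.

Lemma qform_bounded A : exists2 c, 0 <= c & forall x, `|qform A x| <= c * vnorm2 x.
Proof.
exists (\sum_i \sum_j `|A i j|).
  by apply: sumr_ge0 => i _; apply: sumr_ge0 => j _.
move=> x; rewrite qform_sum mulr_suml.
apply: le_trans (ler_norm_sum _ _ _) _; apply: ler_sum => i _.
rewrite mulr_suml; apply: le_trans (ler_norm_sum _ _ _) _; apply: ler_sum => j _.
rewrite mulrAC normrM [_ * vnorm2 x]mulrC ler_wpM2r //.
have hi := sqr_coord_le_vnorm2 x i; have hj := sqr_coord_le_vnorm2 x j.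
rewrite -(real_normK (num_real (x i 0))) in hi.
rewrite -(real_normK (num_real (x j 0))) in hj.
rewrite normrM; move: (`|x i 0|) (`|x j 0|) hi hj => a b ha hb.
have := sqr_ge0 (a - b); rewrite sqrrB; lra.
Qed.

Lemma qform_invmx_bounds B mu : B \in unitmx -> 0 < mu ->
    (forall x, mu * vnorm2 x <= qform B x) ->
  forall x, 0 <= qform (invmx B) x <= vnorm2 x / mu.
Proof.
move=> uB mu0 hB x; set z := invmx B *m x.
have Bz : B *m z = x by rewrite mulKVmx.
have -> : qform (invmx B) x = vdot z x by rewrite qformE vdotC.
have hz : mu * vnorm2 z <= vdot z x by have := hB z; rewrite qformE Bz.
have z0 := vnorm2_ge0 z.
have h := vnorm2_ge0 (x - mu *: z).
rewrite /vnorm2 vdotBl !vdotBr !vdotZl !vdotZr (vdotC x z) -!/(vnorm2 _) in h.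
rewrite ler_pdivlMr // (le_trans _ hz) ?mulr_ge0 ?(ltW mu0) //=; nra.
Qed.

Lemma qform_ge_of_invmx A c : A \in unitmx -> A^T = A -> 0 < c ->
    (forall x, qform (invmx A) x <= c * vnorm2 x) ->
  (forall x, 0 <= qform A x) -> forall x, vnorm2 x / c <= qform A x.
Proof.
move=> uA sA c0 hAi hA x; set a := c^-1.
have ha : a * c = 1 by rewrite mulVf ?gt_eqF.
have a0 : 0 < a by rewrite invr_gt0.
(* Expand [0 <= qform A (x - a A^-1 x)], where [<A^-1 x, A x> = |x|^2]. *)
have := hA (x - a *: (invmx A *m x)).
rewrite qformE mulmxBr -scalemxAr mulKVmx // vdotBl !vdotBr !vdotZl !vdotZr.
rewrite (vdot_mulmxr (invmx A *m x)) sA mulKVmx // (vdotC _ x) -!qformE -/(vnorm2 x).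
have h := hAi x; have n0 := vnorm2_ge0 x.
have : a * (a * qform (invmx A) x) <= a * vnorm2 x.
  by rewrite ler_pM2l // -[vnorm2 x]mul1r -ha -mulrA ler_pM2l.
rewrite mulrC; lra.
Qed.

Lemma sym_entry_le N b : N^T = N ->
  (forall x, `|qform N x| <= b * vnorm2 x) -> forall i j, `|N i j| <= b.
Proof.
move=> sN hb i j.
pose ei := delta_mx i 0 : 'cV[R]_d; pose ej := delta_mx j 0 : 'cV[R]_d.
have entry k l : vdot (delta_mx k 0) (N *m delta_mx l 0) = N k l.
  by rewrite /vdot trmx_delta -colE -rowE !mxE.
have unit k : vnorm2 (delta_mx k 0 : 'cV_d) = 1.
  by rewrite /vnorm2 /vdot trmx_delta mul_delta_mx mxE !eqxx.
have Nji : N j i = N i j by rewrite -{1}sN mxE.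
have polar : qform N (ei + ej) - qform N (ei - ej) = 4 * N i j.
  rewrite !qformE mulmxDr mulmxBr.
  by rewrite ?vdotDl ?vdotDr ?vdotBl ?vdotBr ?vdotNl ?vdotNr !entry Nji; ring.
have norms : vnorm2 (ei + ej) + vnorm2 (ei - ej) = 4.
  rewrite /vnorm2 ?vdotDl ?vdotDr ?vdotBl ?vdotBr ?vdotNl ?vdotNr -!/(vnorm2 _).
  by rewrite !unit (vdotC ej); ring.
have : `|4 * N i j| <= b * 4.
  rewrite -polar -norms mulrDr; apply: le_trans (ler_normB _ _) _.
  exact: lerD.
by rewrite normrM ger0_norm // mulrC ler_pM2r.
Qed.

End QuadraticForm.

Lemma linear_coef_eq0 (R : realFieldType) (L C delta : R) : 0 < delta ->
  (forall t, `|t| <= delta -> 0 <= t * L + t ^+ 2 * C) -> L = 0.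
Proof.
move=> delta0 h.
have L1 : 0 < `|L| + 1 by have := normr_ge0 L; lra.
have C1 : 0 < `|C| + 1 by have := normr_ge0 C; lra.
set s := Num.min (delta / (`|L| + 1)) (`|C| + 1)^-1.
have s0 : 0 < s by rewrite lt_min divr_gt0 // invr_gt0.
have sL : s * (`|L| + 1) <= delta by rewrite -ler_pdivlMr // ge_min lexx.
have sC : s * (`|C| + 1) <= 1 by rewrite -ler_pdivlMr // mul1r ge_min lexx orbT.
have ht : `|- (s * L)| <= delta.
  by rewrite normrN normrM gtr0_norm //; have := normr_ge0 L; nra.
have := h _ ht; rewrite sqrrN => {}h.
have sC1 : 0 < s * (1 - s * C).
  have : s * C <= s * `|C| by rewrite ler_pM2l // ler_norm.
  by move=> ?; apply: mulr_gt0 => //; lra.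
have : L ^+ 2 * (s * (1 - s * C)) <= 0 by nra.
by rewrite pmulr_lle0 // => L2; apply/eqP; rewrite -sqrf_eq0 eq_le L2 sqr_ge0.
Qed.

Lemma norm_trace_mul_le (R : numDomainType) n (W N : 'M[R]_n) b :
    (forall i j, `|N i j| <= b) ->
  `|\tr (W *m N)| <= (\sum_i \sum_j `|W i j|) * b.
Proof.
move=> hb; rewrite /mxtrace mulr_suml.
apply: le_trans (ler_norm_sum _ _ _) _; apply: ler_sum => i _.
rewrite mxE mulr_suml; apply: le_trans (ler_norm_sum _ _ _) _.
by apply: ler_sum => j _; rewrite normrM ler_wpM2l.
Qed.

Lemma invmxDZ_expand (R : comUnitRingType) n (P D : 'M[R]_n) (t : R) :
    P \in unitmx -> P + t *: D \in unitmx ->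
  invmx (P + t *: D) = invmx P - t *: (invmx P *m D *m invmx P)
    + t ^+ 2 *: (invmx P *m D *m invmx (P + t *: D) *m D *m invmx P).
Proof.
move=> uP uQ; set Q := P + t *: D; set Pi := invmx P; set Qi := invmx Q.
have QiE : Qi = Pi - t *: (Pi *m D *m Qi).
  have : Pi = Pi *m Q *m Qi by rewrite -mulmxA mulmxV // mulmx1.
  rewrite /Q mulmxDr mulVmx // -scalemxAr mulmxDl mul1mx -scalemxAl => e.
  by rewrite {1}e addrK.
have QiE' : Qi = Pi - t *: (Qi *m D *m Pi).
  have : Pi = Qi *m Q *m Pi by rewrite mulVmx // mul1mx.
  rewrite /Q mulmxDr mulmxDl -[Qi *m P *m Pi]mulmxA mulmxV // mulmx1.
  rewrite -scalemxAr -scalemxAl => e.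
  by rewrite {1}e addrK.
rewrite {1}QiE {1}QiE' !mulmxBr -scalemxAr scalerBr scalerA -expr2 !mulmxA.
by rewrite opprB addrA addrAC.
Qed.

Section PositiveDefinite.
Variables (R : realType) (d : nat).
Implicit Types (A D P : 'M[R]_d) (x : 'cV[R]_d).

Lemma pd_psd A : pd A -> psd A.
Proof.
case=> sA pA; split=> // x; have [->|nz] := eqVneq x 0; last exact: ltW (pA x nz).
by rewrite mulmx0 mxE.
Qed.

Lemma pd_unitmx A : pd A -> A \in unitmx.
Proof.
case=> sA pA; rewrite -row_free_unit; apply: inj_row_free => v vA0.
apply/trmx_inj/eqP; rewrite linear0; apply: contraT => /pA.
by rewrite trmxK vA0 mul0mx mxE ltxx.
Qed.

Lemma coercive_pd A mu : A^T = A -> 0 < mu ->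
  (forall x, mu * vnorm2 x <= qform A x) -> pd A.
Proof.
move=> sA mu0 hA; split=> // x nz.
exact: lt_le_trans (mulr_gt0 mu0 (vnorm2_gt0 nz)) (hA x).
Qed.

(* Coercivity is obtained from the boundedness of the inverse form rather than
   from compactness of the unit sphere. *)
Lemma pd_coercive A : pd A ->
  exists2 mu, 0 < mu & forall x, mu * vnorm2 x <= qform A x.
Proof.
move=> pdA; have [c c0 hc] := qform_bounded (invmx A).
have c1 : 0 < c + 1 by lra.
exists (c + 1)^-1; first by rewrite invr_gt0.
move=> x; rewrite mulrC; apply: qform_ge_of_invmx => //; first exact: pd_unitmx.
- by case: pdA.
- move=> y; apply: le_trans (ler_norm _) _; apply: le_trans (hc y) _.
  by rewrite ler_wpM2r ?vnorm2_ge0 // lerDl.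
- exact: (pd_psd pdA).2.
Qed.

Lemma coercive_invmx_entry_le A mu : A^T = A -> 0 < mu ->
    (forall x, mu * vnorm2 x <= qform A x) ->
  forall i j, `|invmx A i j| <= mu^-1.
Proof.
move=> sA mu0 hA; have uA := pd_unitmx (coercive_pd sA mu0 hA).
apply: sym_entry_le; first by rewrite trmx_inv sA.
move=> x; have /andP[q0 q1] := qform_invmx_bounds uA mu0 hA x.
by rewrite ger0_norm // mulrC.
Qed.

Lemma pd_addZ_locally P D : pd P -> D^T = D ->
  exists2 delta, 0 < delta & exists b, forall t, `|t| <= delta ->
    pd (P + t *: D) /\ forall i j, `|invmx (P + t *: D) i j| <= b.
Proof.
move=> pdP sD; have [mu mu0 hP] := pd_coercive pdP.
have [c c0 hD] := qform_bounded D.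
have c1 : 0 < c + 1 by lra.
exists (mu / 2 / (c + 1)); first by rewrite !divr_gt0.
exists (mu / 2)^-1 => t ht.
have mu2 : 0 < mu / 2 by rewrite divr_gt0.
have sQ : (P + t *: D)^T = P + t *: D by rewrite linearD linearZ /= sD pdP.1.
suff hQ x : mu / 2 * vnorm2 x <= qform (P + t *: D) x.
  by split; [apply: coercive_pd hQ | apply: coercive_invmx_entry_le hQ].
have tc : `|t| * (c + 1) <= mu / 2 by rewrite -ler_pdivlMr.
have tq : `|t| * `|qform D x| <= mu / 2 * vnorm2 x.
  apply: le_trans (_ : `|t| * ((c + 1) * vnorm2 x) <= _).
    by rewrite ler_wpM2l // (le_trans (hD x)) // ler_wpM2r ?vnorm2_ge0 ?lerDl.
  by rewrite mulrA ler_wpM2r ?vnorm2_ge0.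
have := ler_norm (- (t * qform D x)); rewrite normrN normrM.
rewrite qformD qformZ; have := hP x; lra.
Qed.

End PositiveDefinite.

Section Frobenius.
Variables (R : realType) (d : nat).
Implicit Types (A B H M N P S X Y : 'M[R]_d).

Lemma frobDr M X Y : frob M (X + Y) = frob M X + frob M Y.
Proof. by rewrite /frob mulmxDr mxtraceD. Qed.
Lemma frobZr M a X : frob M (a *: X) = a * frob M X.
Proof. by rewrite /frob -scalemxAr mxtraceZ. Qed.
Lemma frobNr M X : frob M (- X) = - frob M X.
Proof. by rewrite -scaleN1r frobZr mulN1r. Qed.
Lemma frobDl M N X : frob (M + N) X = frob M X + frob N X.
Proof. by rewrite /frob linearD /= mulmxDl mxtraceD. Qed.
Lemma frobZl M a X : frob (a *: M) X = a * frob M X.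
Proof. by rewrite /frob linearZ /= -scalemxAl mxtraceZ. Qed.
Lemma frobNl M X : frob (- M) X = - frob M X.
Proof. by rewrite -scaleN1r frobZl mulN1r. Qed.

Lemma frob_mulmx M A X B : frob M (A *m X *m B) = \tr (B *m M^T *m A *m X).
Proof. by rewrite /frob mulmxA mxtrace_mulC !mulmxA. Qed.

Lemma mxtrace_sandwich P H : P^T = P -> \tr (P *m H *m P) = frob (P *m P) H.
Proof. by move=> sP; rewrite /frob trmx_mul sP mxtrace_mulC mulmxA. Qed.

Lemma frob_self_eq0 S : frob S S = 0 -> S = 0.
Proof.
move=> h; apply/matrixP => j i; rewrite mxE; apply/eqP.
rewrite -sqrf_eq0 eq_le sqr_ge0 andbT -h.
have -> : frob S S = \sum_i \sum_j S j i ^+ 2.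
  rewrite /frob /mxtrace; apply: eq_bigr => k _; rewrite mxE.
  by apply: eq_bigr => l _; rewrite !mxE expr2.
rewrite (bigD1 i) //= (bigD1 j) //= -addrA lerDl.
by rewrite addr_ge0 ?sumr_ge0 // => *; rewrite ?sumr_ge0 // => *; apply: sqr_ge0.
Qed.

End Frobenius.

Section WellStructured.
Variables (R : realType) (d : nat) (Hs K : 'M[R]_d -> Prop).
Hypotheses (KZ : forall (a : R) A, K A -> K (a *: A))
  (KD : forall A B, K A -> K B -> K (A + B))
  (KM : forall A B, K A -> K B -> K (A *m B))
  (K1 : K 1%:M)
  (HsE : forall H, Hs H <-> psd H /\ K H).
Implicit Types (D H M P S : 'M[R]_d).

Lemma PH_stationary M P D : is_PH Hs M P -> K D -> D^T = D ->
  \tr D = frob M (invmx P *m D *m invmx P).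
Proof.
move=> [HsP pdP opt] KDD sD; have KP : K P by case/HsE: HsP.
have uP := pd_unitmx pdP.
have [delta delta0 [b hb]] := pd_addZ_locally pdP sD.
set Pi := invmx P; set W := D *m Pi *m M^T *m Pi *m D.
apply/eqP; rewrite -subr_eq0; apply/eqP.
apply: (linear_coef_eq0 (C := (\sum_i \sum_j `|W i j|) * b) delta0) => t ht.
have [pdQ hQi] := hb t ht; set Q := P + t *: D in pdQ hQi *.
have HsQ : Hs Q by apply/HsE; split; [exact: pd_psd | exact: KD KP (KZ t KDD)].
have r_le :
    t ^+ 2 * \tr (W *m invmx Q) <= t ^+ 2 * ((\sum_i \sum_j `|W i j|) * b).
  by rewrite ler_wpM2l ?sqr_ge0 // (le_trans (ler_norm _)) ?norm_trace_mul_le.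
have := opt _ HsQ pdQ.
rewrite /Q (invmxDZ_expand uP (pd_unitmx pdQ)) -/Pi -/Q !frobDr frobNr !frobZr.
rewrite -[Pi *m D *m invmx Q *m D *m Pi]mulmxA (frob_mulmx M (Pi *m D)).
rewrite !mulmxA -/W mxtraceD mxtraceZ.
lra.
Qed.

Lemma PH_frob_sqr M P H : is_PH Hs M P -> Hs H -> frob M H = frob (P *m P) H.
Proof.
move=> hP HsH; have [HsP pdP _] := hP; have sP : P^T = P := pdP.1.
have uP := pd_unitmx pdP; have KP : K P by case/HsE: HsP.
have [[sH _] KH] := (HsE H).1 HsH.
have sPHP : (P *m H *m P)^T = P *m H *m P by rewrite !trmx_mul sP sH mulmxA.
rewrite -mxtrace_sandwich // (PH_stationary hP (KM (KM KP KH) KP) sPHP).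
by rewrite !mulmxA mulVmx // mul1mx -mulmxA mulmxV // mulmx1.
Qed.

Lemma sym_orthogonal_eq0 S : K S -> S^T = S ->
  (forall H, Hs H -> frob S H = 0) -> S = 0.
Proof.
move=> KS sS orth; have [c c0 hc] := qform_bounded S.
have Hs1 : Hs 1%:M.
  apply/HsE; split=> //; split=> [|x]; first by rewrite trmx1.
  by rewrite -/(qform _ x) qform1 vnorm2_ge0.
have HscS : Hs (c *: 1%:M + S).
  apply/HsE; split; last exact: KD (KZ c K1) KS.
  split=> [|x]; first by rewrite linearD linearZ /= trmx1 sS.
  rewrite -/(qform _ x) qformD qformZ qform1.
  by have := hc x; rewrite ler_norml => /andP[h _]; lra.
apply: frob_self_eq0.
by have := orth _ HscS; rewrite frobDr frobZr orth // mulr0 add0r.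
Qed.

End WellStructured.

Theorem lemmaA2 (R : realType) (d : nat) (Hs : 'M[R]_d -> Prop) (M : 'M[R]_d)
  (hHs : well_structured Hs) (hM : pd M) (P : 'M[R]_d) (hP : is_PH Hs M P) :
  (forall H, Hs H -> frob M H = frob (P *m P) H) /\
  (forall (lam : R), 0 <= lam -> forall Q : 'M[R]_d,
      is_PH Hs (M + lam%:M) Q -> Q *m Q = P *m P + lam%:M).
Proof.
have [K [KZ KD KM K1 HsE]] := hHs.
have PPsqr := PH_frob_sqr KZ KD KM HsE.
split=> [H|lam _ Q hQ]; first exact: PPsqr.
have [[HsP pdP _] [HsQ pdQ _]] := (hP, hQ).
have KP : K P by case/HsE: HsP.
have KQ : K Q by case/HsE: HsQ.
set S := Q *m Q - P *m P - lam%:M.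
have KS : K S.
  rewrite /S -!scaleN1r -scalemx1.
  by apply: (KD); [apply: (KD); [|apply: (KZ)] | do 2 apply: (KZ)]; try apply: (KM).
have sS : S^T = S by rewrite /S !linearB /= !trmx_mul pdP.1 pdQ.1 tr_scalar_mx.
have orth H : Hs H -> frob S H = 0.
  move=> HsH; rewrite /S !frobDl !frobNl.
  by rewrite -(PPsqr _ _ _ hQ HsH) -(PPsqr _ _ _ hP HsH) frobDl; ring.
move/eqP: (sym_orthogonal_eq0 KZ KD K1 HsE KS sS orth).
by rewrite /S subr_eq0 subr_eq addrC => /eqP.
Qed.
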